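(* Let $\mathbb{X}=\ell_\infty^3$ and let $\mathbb{Y}$ be a two-dimensional polygonal Banach space. Let $T\in\mathbb{L}(\mathbb{X},\mathbb{Y})$ with $\|T\|=1$. Then $T$ is an extreme contraction if and only if $|M_T\cap\operatorname{Ext}(B_{\mathbb{X}})|\geq 6$ and $T(M_T\cap\operatorname{Ext}(B_{\mathbb{X}}))\subseteq\operatorname{Ext}(B_{\mathbb{Y}})$.
   Context: $\mathbb{L}(\mathbb{X},\mathbb{Y})$ is the space of linear operators with the operator norm. $B_{\mathbb{X}}$ denotes the closed unit ball and $\operatorname{Ext}(\cdot)$ the set of its extreme points; $M_T=\{x\in\mathbb{X}:\|x\|=1,\ \|Tx\|=\|T\|\}$. A two-dimensional Banach space is polygonal if its unit ball has only finitely many extreme points. $T$ is an extreme contraction if it is an extreme point of the unit ball of $\mathbb{L}(\mathbb{X},\mathbb{Y})$. *)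

From HB Require Import structures.
From mathcomp Require Import all_boot all_order all_algebra.
From mathcomp Require Import all_classical all_reals.
Set Implicit Arguments. Unset Strict Implicit. Unset Printing Implicit Defensive.
Import Order.TTheory GRing.Theory Num.Theory.
Local Open Scope ring_scope.
Local Open Scope classical_set_scope.

Definition extreme_point (R : realType) (V : lmodType R) (S : set V) (x : V) : Prop :=
  S x /\ forall (y z : V) (t : R), S y -> S z -> 0 < t -> t < 1 ->
    x = t *: y + (1 - t) *: z -> y = z.

Definition linf3 (R : realType) (x : 'cV[R]_3) : R :=
  \big[Num.max/0]_(i < 3) `|x i 0|.

(* N is a norm on R^2; any norm on R^2 gives a Banach space. *)
Definition is_norm2 (R : realType) (N : 'cV[R]_2 -> R) : Prop :=
  [/\ (forall x, N x = 0 -> x = 0),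
      (forall (a : R) x, N (a *: x) = `|a| * N x) &
      (forall x y, N (x + y) <= N x + N y)].

Definition ballX (R : realType) : set 'cV[R]_3 := [set x | linf3 x <= 1].
Definition ballY (R : realType) (N : 'cV[R]_2 -> R) : set 'cV[R]_2 := [set y | N y <= 1].

Definition polygonal (R : realType) (N : 'cV[R]_2 -> R) : Prop :=
  finite_set (extreme_point (ballY N)).

Definition opnorm (R : realType) (N : 'cV[R]_2 -> R) (T : 'M[R]_(2,3)) : R :=
  sup [set r | exists x, @ballX R x /\ r = N (T *m x)].

Definition MT (R : realType) (N : 'cV[R]_2 -> R) (T : 'M[R]_(2,3)) : set 'cV[R]_3 :=
  [set x | linf3 x = 1 /\ N (T *m x) = opnorm N T].

Definition extreme_contraction (R : realType) (N : 'cV[R]_2 -> R) (T : 'M[R]_(2,3)) : Prop :=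
  extreme_point [set S : 'M[R]_(2,3) | opnorm N S <= 1] T.

(** The extreme points of the unit ball of l_infty^3 are the eight sign vectors,
    which come in four antipodal pairs, and any three of four pairwise non-antipodal
    sign vectors form a basis of R^3.

    If at least three pairs lie in M_T and T maps them to extreme points, then any
    decomposition T = t Y + (1 - t) Z in the unit ball forces Y and Z to agree on these
    three pairs, hence Y = Z.

    Conversely let T be extreme.  If at most two pairs lie in M_T, some nonzero
    functional r vanishes on them, and T +- eps (r (.)) w stays in the unit ball for small
    eps, a contradiction.  If a sign vector x in M_T had a non-extreme image, then after
    flipping coordinates we may take x = (1,1,1), and P = T x can be moved by +-w inside
    the ball.  Perturbing T along the functional supported on an edge of the cube shows
    that the images q_k of the three neighbours of x cannot move along w, so each is the
    top or bottom end of its chord in direction w.  But q_0 + q_1 + q_2 = P, which is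
    impossible in a two-dimensional ball: in coordinates adapted to the supporting line
    P + R w, the chord ends form a concave (resp. convex) graph. *)

From HB Require Import structures.
From mathcomp Require Import all_boot all_order all_algebra.
From mathcomp Require Import all_classical all_reals.
From mathcomp Require Import ring lra.
Import Order.TTheory GRing.Theory Num.Theory.
Local Open Scope ring_scope.
Local Open Scope classical_set_scope.
Set Implicit Arguments. Unset Strict Implicit. Unset Printing Implicit Defensive.

Lemma uniform_pos (R : realDomainType) (I : finType) (P : I -> R -> Prop) :
  (forall i, exists2 e, 0 < e & forall t, 0 < t <= e -> P i t) ->
  exists2 t, 0 < t & forall i, P i t.
Proof.
move=> H.
suff [e e0 He] : exists2 e, 0 < e & forall i, i \in enum I -> forall t, 0 < t <= e -> P i t.
  by exists e => // i; apply: He; rewrite ?mem_enum ?e0 ?lexx.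
elim: (enum I) => [|i s [e e0 He]]; first by exists 1.
have [ei ei0 Hi] := H i.
exists (Num.min e ei) => [|j]; first by rewrite lt_min e0 ei0.
rewrite inE => /orP[/eqP -> | js] t /andP[t0]; rewrite le_min => /andP[te tei].
- by apply: Hi; rewrite t0.
- by apply: He; rewrite ?t0.
Qed.

Lemma segment_param (R : realFieldType) (lo v hi : R) : lo <= v <= hi ->
  exists2 l, 0 <= l <= 1 & v = l * lo + (1 - l) * hi.
Proof.
case/andP=> h1 h2; have [e|ne] := eqVneq lo hi.
  by exists 0; [rewrite lexx ler01 | rewrite -e; lra].
have hlt : 0 < hi - lo by rewrite subr_gt0 lt_def eq_sym ne (le_trans h1 h2).
exists ((hi - v) / (hi - lo)); last by field; rewrite gt_eqF.
by rewrite divr_ge0 ?ler_pdivrMr ?subr_ge0 //=; lra.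
Qed.

Lemma ord2P (i : 'I_2) : i = 0 \/ i = 1.
Proof. by case: i => [[|[|n]] hi]; [left | right |] => //; apply: val_inj. Qed.

Definition det2 (R : pzRingType) (a b : 'cV[R]_2) : R := a 0 0 * b 1 0 - a 1 0 * b 0 0.

Lemma det2_eq0_parallel (R : fieldType) (a w : 'cV[R]_2) :
  w != 0 -> det2 a w = 0 -> exists s, a = s *: w.
Proof.
move=> w0 da; have [i wi] : exists i, w i 0 != 0.
  move/matrix0Pn: w0 => [i [j]]; rewrite [j]ord1; by exists i.
exists (a i 0 / w i 0); apply/matrixP => k j; rewrite (ord1 j) mxE.
apply: (mulIf wi); rewrite mulrAC divfK //.
move/eqP: da; rewrite subr_eq0 => /eqP da.
by case: (ord2P i) => ->; case: (ord2P k) => ->; rewrite ?da.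
Qed.

Lemma size_filter_pm (V : zmodType) (p : pred V) (l : seq V) : (forall u, p (- u) = p u) ->
  size [seq u <- flatten [seq [:: u; - u] | u <- l] | p u] = (count p l).*2.
Proof. by move=> hp; elim: l => //= u l IH; rewrite hp; case: (p u); rewrite /= IH. Qed.

Definition i0 : 'I_3 := ord0.
Definition i1 : 'I_3 := lift ord0 (ord0 : 'I_2).
Definition i2 : 'I_3 := lift ord0 (lift ord0 (ord0 : 'I_1)).

Lemma ord3P (i : 'I_3) : [\/ i = i0, i = i1 | i = i2].
Proof.
case: i => [[|[|[|n]]] hi] //.
- by apply: Or31; apply: val_inj.
- by apply: Or32; apply: val_inj.
- by apply: Or33; apply: val_inj.
Qed.

(** * Norms on R^2 *)

Section NormY.
Variables (R : realType) (N : 'cV[R]_2 -> R).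
Hypothesis hN : is_norm2 N.

Lemma normYZ a x : N (a *: x) = `|a| * N x.
Proof. by case: hN. Qed.

Lemma normYD x y : N (x + y) <= N x + N y.
Proof. by case: hN. Qed.

Lemma normY0 : N 0 = 0.
Proof. by rewrite -(scale0r (0 : 'cV[R]_2)) normYZ normr0 mul0r. Qed.

Lemma normYN x : N (- x) = N x.
Proof. by rewrite -scaleN1r normYZ normrN normr1 mul1r. Qed.

Lemma normY_ge0 x : 0 <= N x.
Proof. by have := normYD x (- x); rewrite subrr normY0 normYN; lra. Qed.

Lemma normY_eq0 x : N x = 0 -> x = 0.
Proof. by case: hN => H _ _; exact: H. Qed.

Lemma normY_gt0 x : x != 0 -> 0 < N x.
Proof. by move=> x0; rewrite lt0r normY_ge0 andbT; apply: contra x0 => /eqP/normY_eq0 ->. Qed.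

Lemma normY_comb t x y : 0 <= t <= 1 -> N (t *: x + (1 - t) *: y) <= t * N x + (1 - t) * N y.
Proof.
case/andP=> t0 t1; apply: le_trans (normYD _ _) _.
by rewrite !normYZ ger0_norm // ger0_norm ?subr_ge0.
Qed.

Lemma normY_convex t x y : 0 <= t <= 1 -> N x <= 1 -> N y <= 1 ->
  N (t *: x + (1 - t) *: y) <= 1.
Proof.
move=> ht hx hy; apply: le_trans (normY_comb x y ht) _; case/andP: ht => t0 t1.
have : t * N x <= t by rewrite -[leRHS]mulr1 ler_wpM2l.
have : (1 - t) * N y <= 1 - t by rewrite -[leRHS]mulr1 ler_wpM2l ?subr_ge0.
lra.
Qed.

Lemma normY_shrink p w s l : N p <= 1 -> N (p + s *: w) <= 1 -> 0 <= l <= 1 ->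
  N (p + (l * s) *: w) <= 1.
Proof.
move=> hp hs hl; have -> : p + (l * s) *: w = l *: (p + s *: w) + (1 - l) *: p.
  by apply/matrixP => i j; rewrite !mxE; ring.
exact: normY_convex.
Qed.

Lemma normY_ge1_ray p w c : N p = 1 -> N (p - w) <= 1 -> 0 <= c -> 1 <= N (p + c *: w).
Proof.
move=> hp hpw c0; set t := 1 / (1 + c).
have t0 : 0 < t by rewrite divr_gt0 //; lra.
have t1 : t <= 1 by rewrite ler_pdivrMr /=; lra.
have E : p = t *: (p + c *: w) + (1 - t) *: (p - w).
  by apply/matrixP => i j; rewrite !mxE /t; field; lra.
have := @normY_comb t (p + c *: w) (p - w); rewrite -E hp (ltW t0) t1 => /(_ isT).
have : (1 - t) * N (p - w) <= 1 - t by rewrite -[leRHS]mulr1 ler_wpM2l ?subr_ge0.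
by move=> h1 h2; rewrite -(ler_pM2l t0) mulr1; lra.
Qed.

End NormY.

(** * The unit cube of l_infty^3 *)

Section Cube.
Variable R : realType.

Definition sg (b : bool) : R := if b then 1 else -1.

Definition signv (b0 b1 b2 : bool) : 'cV[R]_3 :=
  \col_(i < 3) sg (if (i : nat) == 0%N then b0 else if (i : nat) == 1%N then b1 else b2).

Lemma sg_norm b : `|sg b| = 1.
Proof. by case: b; rewrite /= ?normrN normr1. Qed.

Lemma signv_opp b0 b1 b2 : signv (~~ b0) (~~ b1) (~~ b2) = - signv b0 b1 b2.
Proof.
apply/matrixP => i j; rewrite !mxE.
by case: (ord3P i) => ->; [case: b0 | case: b1 | case: b2]; rewrite /sg /= ?opprK.
Qed.

Lemma signv_inj a0 a1 a2 b0 b1 b2 :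
  (signv a0 a1 a2 == signv b0 b1 b2) = [&& a0 == b0, a1 == b1 & a2 == b2].
Proof.
apply/eqP/and3P => [/matrixP h | [/eqP -> /eqP -> /eqP ->] //].
move: (h i0 0) (h i1 0) (h i2 0) => {h}; rewrite !mxE /sg /=.
by case: a0 b0 a1 b1 a2 b2 => [] [] [] [] [] [] //= *; lra.
Qed.

Lemma mulmx_col3 m (S : 'M[R]_(m, 3)) (x : 'cV[R]_3) :
  S *m x = x i0 0 *: col i0 S + x i1 0 *: col i1 S + x i2 0 *: col i2 S.
Proof.
apply/matrixP => i j; rewrite (ord1 j) !mxE !big_ord_recl big_ord0 ?mxE.
by rewrite /i0 /i1 /i2; ring.
Qed.

Lemma mulmx_signv m (S : 'M[R]_(m, 3)) b0 b1 b2 :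
  S *m signv b0 b1 b2 = sg b0 *: col i0 S + sg b1 *: col i1 S + sg b2 *: col i2 S.
Proof. by rewrite mulmx_col3 !mxE. Qed.

Lemma ballXP (x : 'cV[R]_3) : ballX x <-> forall k, `|x k 0| <= 1.
Proof.
rewrite /ballX /linf3 /= !big_ord_recl big_ord0 !ge_max ler01 andbT.
split => [/and3P[h0 h1 h2] k | H]; last by rewrite !H.
by case: (ord3P k) => ->.
Qed.

Lemma linf3_signv b0 b1 b2 : linf3 (signv b0 b1 b2) = 1.
Proof.
rewrite /linf3 !big_ord_recl big_ord0 !mxE /= !sg_norm.
by rewrite (@maxEle _ _ 1 0) ler10 !maxxx.
Qed.

Lemma signv_ballX b0 b1 b2 : ballX (signv b0 b1 b2).
Proof. by rewrite /ballX /= linf3_signv. Qed.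

Lemma extreme_coord (s t a b : R) : `|s| = 1 -> s = t * a + (1 - t) * b ->
  `|a| <= 1 -> `|b| <= 1 -> 0 < t < 1 -> a = b.
Proof.
move=> hs es; rewrite {}es in hs; rewrite !ler_norml => /andP[ha1 ha2] /andP[hb1 hb2] /andP[t0 t1].
have hta : 0 <= t * (1 - a) /\ 0 <= t * (1 + a) by split; apply: mulr_ge0; lra.
have htb : 0 <= (1 - t) * (1 - b) /\ 0 <= (1 - t) * (1 + b) by split; apply: mulr_ge0; lra.
move/eqP: hs; rewrite eqr_norml => /andP[/orP[] /eqP hs _].
- have /eqP : t * (1 - a) = 0 by nra.
  have /eqP : (1 - t) * (1 - b) = 0 by nra.
  by rewrite !mulf_eq0 => /orP[] /eqP ? /orP[] /eqP ?; lra.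
- have /eqP : t * (1 + a) = 0 by nra.
  have /eqP : (1 - t) * (1 + b) = 0 by nra.
  by rewrite !mulf_eq0 => /orP[] /eqP ? /orP[] /eqP ?; lra.
Qed.

Lemma signv_extreme b0 b1 b2 : extreme_point (@ballX R) (signv b0 b1 b2).
Proof.
split=> [|y z t /ballXP hy /ballXP hz t0 t1 e]; first exact: signv_ballX.
apply/matrixP => i j; rewrite (ord1 j).
apply: (extreme_coord (s := signv b0 b1 b2 i 0) _ _ (hy i) (hz i)).
- by rewrite mxE sg_norm.
- by rewrite e !mxE.
- by rewrite t0 t1.
Qed.

Lemma extreme_ballX_signv (x : 'cV[R]_3) :
  extreme_point (@ballX R) x -> exists b0 b1 b2, x = signv b0 b1 b2.
Proof.
case=> /ballXP hx hext.
suff unit_coord k : `|x k 0| = 1.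
  exists (0 < x i0 0), (0 < x i1 0), (0 < x i2 0).
  have coordE l : x l 0 = sg (0 < x l 0).
    by move: (unit_coord l); rewrite /sg; case: ltrP => [/gtr0_norm|/ler0_norm] -> // <-;
      rewrite opprK.
  by apply/matrixP => i j; rewrite (ord1 j) mxE; case: (ord3P i) => ->; rewrite -coordE.
apply/eqP; rewrite eq_le hx /= leNgt; apply/negP => hlt.
pose d : 'cV[R]_3 := \col_l (if l == k then 1 - `|x k 0| else 0).
have ball_pm (s : R) : `|s| = 1 -> ballX (x + s *: d).
  move=> hs; apply/ballXP => l; rewrite !mxE.
  case: eqP => [->|_]; last by rewrite mulr0 addr0.
  by apply: le_trans (ler_normD _ _) _; rewrite normrM hs mul1r ger0_norm; lra.
have mid : x = 1 / 2 *: (x + 1 *: d) + (1 - 1 / 2) *: (x + -1 *: d).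
  by apply/matrixP => i j; rewrite !mxE; field.
have /(_ ltac:(lra) ltac:(lra) mid) := hext _ _ (1 / 2) (ball_pm 1 (normr1 _))
  (ball_pm (-1) (normrN1 _)).
move/matrixP/(_ k 0); rewrite !mxE eqxx; lra.
Qed.

Definition row3 (a b c : R) : 'rV[R]_3 :=
  \row_(j < 3) (if (j : nat) == 0%N then a else if (j : nat) == 1%N then b else c).

Lemma row3_signv a b c b0 b1 b2 :
  (row3 a b c *m signv b0 b1 b2) 0 0 = sg b0 * a + sg b1 * b + sg b2 * c.
Proof. by rewrite !mxE !big_ord_recl big_ord0 !mxE /=; ring. Qed.

Lemma scale_sg_signv s b0 b1 b2 :
  sg s *: signv b0 b1 b2 = signv (b0 == s) (b1 == s) (b2 == s).
Proof. by case: s; rewrite /sg ?scale1r ?scaleN1r -?signv_opp ?eqb_id ?eqbF_neg. Qed.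

(** For a neighbour u of (1,1,1) the row below is ((1,1,1) + u)^T / 4: it takes the
    values +-1 on the four vertices +-(1,1,1), +-u and vanishes on the other four. *)
Lemma edge_row_signv b0 b1 b2 e0 e1 e2 : (~~ b0 + ~~ b1 + ~~ b2 == 1)%N ->
  let a := (row3 (b0%:R / 2) (b1%:R / 2) (b2%:R / 2) *m signv e0 e1 e2) 0 0 in
  a = 0 \/ exists s, a = sg s /\ (signv e0 e1 e2 = sg s *: signv true true true
                                  \/ signv e0 e1 e2 = sg s *: signv b0 b1 b2).
Proof.
rewrite /= row3_signv; case: b0 b1 b2 e0 e1 e2 => [] [] [] [] [] [] //= _.
all: first [ by left; rewrite /sg; lra
           | by right; exists true; rewrite !scale_sg_signv /sg /=;
                split; [lra | by [left | right]]
           | by right; exists false; rewrite !scale_sg_signv /sg /=;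
                split; [lra | by [left | right]] ].
Qed.

Definition reps : seq 'cV[R]_3 :=
  [:: signv true true true; signv true true false; signv true false true; signv true false false].

Definition vertices : seq 'cV[R]_3 := flatten [seq [:: u; - u] | u <- reps].

Lemma vertices_uniq : uniq vertices.
Proof. by rewrite /vertices /= !inE -!signv_opp !signv_inj. Qed.

Lemma mem_vertices b0 b1 b2 : signv b0 b1 b2 \in vertices.
Proof. by case: b0 b1 b2 => [] [] []; rewrite /vertices /= !inE -!signv_opp !signv_inj. Qed.

Lemma vertices_signv x : x \in vertices -> exists b0 b1 b2, x = signv b0 b1 b2.
Proof.
case/flatten_mapP => u; rewrite !inE => /or4P[] /eqP -> /orP[] /eqP ->;
  rewrite -?signv_opp; by do 3 eexists.
Qed.

Lemma signv_rep b0 b1 b2 : exists2 u, u \in reps & exists s, signv b0 b1 b2 = sg s *: u.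
Proof.
exists (signv true (b1 == b0) (b2 == b0)).
  by rewrite !inE !signv_inj; case: b0 b1 b2 => [] [] [].
by exists b0; rewrite scale_sg_signv; case: b0 b1 b2 => [] [] [].
Qed.

Lemma kill_three_reps_eq0 m (D : 'M[R]_(m, 3)) :
  (3 <= count (fun u => D *m u == 0%R) reps)%N -> D = 0.
Proof.
move=> hc; apply/matrixP => i j; rewrite mxE.
have kill b1 b2 : D *m signv true b1 b2 == 0 ->
    D i i0 + (if b1 then 1 else -1) * D i i1 + (if b2 then 1 else -1) * D i i2 = 0.
  by move/eqP/matrixP/(_ i 0); rewrite mulmx_signv !mxE mul1r.
move: hc; rewrite /reps /=.
case: (boolP (D *m signv true true true == 0)) => [/kill /= h1 | _];
case: (boolP (D *m signv true true false == 0)) => [/kill /= h2 | _];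
case: (boolP (D *m signv true false true == 0)) => [/kill /= h3 | _];
case: (boolP (D *m signv true false false == 0)) => [/kill /= h4 | _] //= _.
all: by case: (ord3P j) => ->; lra.
Qed.

Lemma row3_eq0 a b c : row3 a b c = 0 -> [/\ a = 0, b = 0 & c = 0].
Proof. by move/matrixP => h; move: (h 0 i0) (h 0 i1) (h 0 i2); rewrite !mxE. Qed.

Lemma exists_row_vanishing (p : pred 'cV[R]_3) : (count p reps <= 2)%N ->
  exists2 r : 'rV[R]_3, r != 0 & forall u, u \in reps -> p u -> (r *m u) 0 0 = 0.
Proof.
rewrite /reps /=.
case h1: (p (signv true true true)); case h2: (p (signv true true false));
case h3: (p (signv true false true)); case h4: (p (signv true false false)) => //= _.
(* Each pair of representatives is annihilated by one of these six rows. *)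
all: let candidate r := solve [exists r;
    [ apply/eqP => /row3_eq0[? ? ?]; lra
    | move=> u; rewrite !inE => /or4P[] /eqP ->; rewrite ?h1 ?h2 ?h3 ?h4 // => _;
      rewrite row3_signv /sg; lra ]] in
  first [ candidate (row3 1 (-1) 0) | candidate (row3 1 0 (-1)) | candidate (row3 0 1 (-1))
        | candidate (row3 0 1 1) | candidate (row3 1 0 1) | candidate (row3 1 1 0) ].
Qed.

Lemma kill_six_vertices_eq0 m (D : 'M[R]_(m, 3)) (s : seq 'cV[R]_3) :
  uniq s -> (6 <= size s)%N -> (forall x, x \in s -> exists b0 b1 b2, x = signv b0 b1 b2) ->
  (forall x, x \in s -> D *m x = 0) -> D = 0.
Proof.
move=> us hs sv hD; apply: kill_three_reps_eq0; rewrite -leq_double.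
rewrite -(size_filter_pm (p := fun u => D *m u == 0)) => [|u]; last by rewrite mulmxN oppr_eq0.
apply: leq_trans hs (uniq_leq_size us _) => x xs.
by rewrite mem_filter hD // eqxx; have [b0 [b1 [b2 ->]]] := sv x xs; exact: mem_vertices.
Qed.

End Cube.

(** * Operator norm and rank-one perturbations *)

Section Contractions.
Variables (R : realType) (N : 'cV[R]_2 -> R).
Hypothesis hN : is_norm2 N.

Lemma normY_segment (c y : 'cV[R]_2) a :
  (forall b, N (sg R b *: c + y) <= 1) -> `|a| <= 1 -> N (a *: c + y) <= 1.
Proof.
move=> H; rewrite ler_norml => /andP[ha1 ha2].
have -> : a *: c + y = ((1 + a) / 2) *: (sg R true *: c + y)
                       + (1 - (1 + a) / 2) *: (sg R false *: c + y).
  by apply/matrixP => i j; rewrite !mxE /=; field.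
by apply: normY_convex => //; apply/andP; split; lra.
Qed.

Lemma normY_cube (c0 c1 c2 : 'cV[R]_2) a0 a1 a2 :
  (forall b0 b1 b2, N (sg R b0 *: c0 + sg R b1 *: c1 + sg R b2 *: c2) <= 1) ->
  `|a0| <= 1 -> `|a1| <= 1 -> `|a2| <= 1 -> N (a0 *: c0 + a1 *: c1 + a2 *: c2) <= 1.
Proof.
move=> H h0 h1 h2; rewrite -addrA; apply: normY_segment => // b0.
rewrite (addrCA (sg R b0 *: c0)); apply: normY_segment => // b1.
rewrite (addrCA (sg R b1 *: c1)) (addrA (sg R b0 *: c0)) (addrC _ (a2 *: c2)).
by apply: normY_segment => // b2; rewrite [_ + (_ + _)]addrC.
Qed.

Lemma opnorm_ub (S : 'M[R]_(2, 3)) x : ballX x -> N (S *m x) <= opnorm N S.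
Proof.
move=> hx; apply: ub_le_sup; last by exists x.
exists (N (col i0 S) + N (col i1 S) + N (col i2 S)) => _ [y [/ballXP hy ->]].
rewrite mulmx_col3; apply: le_trans (normYD hN _ _) _.
apply: lerD; first apply: le_trans (normYD hN _ _) (lerD _ _).
all: by rewrite normYZ // -[leRHS]mul1r ler_wpM2r ?normY_ge0.
Qed.

Lemma opnorm_le1 (S : 'M[R]_(2, 3)) :
  (forall b0 b1 b2, N (S *m signv R b0 b1 b2) <= 1) -> opnorm N S <= 1.
Proof.
move=> H; apply: ge_sup.
  by exists (N (S *m signv R true true true)), (signv R true true true);
    split => //; exact: signv_ballX.
move=> _ [x [/ballXP hx ->]]; rewrite mulmx_col3.
by apply: normY_cube => // b0 b1 b2; rewrite -mulmx_signv.
Qed.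

Definition movable (w p : 'cV[R]_2) (a : R) :=
  N (p + a *: w) <= 1 /\ N (p - a *: w) <= 1.

Lemma movable0 w p : N p <= 1 -> movable w p 0.
Proof. by rewrite /movable scale0r addr0 subr0. Qed.

Lemma movable_sg w p a s : movable w p a -> movable w (sg R s *: p) (a * sg R s).
Proof.
have E (u : 'cV[R]_2) : N (sg R s *: u) = N u by rewrite normYZ // sg_norm mul1r.
by rewrite /movable mulrC -!scalerA -scalerBr -scalerDr !E.
Qed.

Lemma movable_scale w p a l : N p <= 1 -> 0 <= l <= 1 -> movable w p a -> movable w p (l * a).
Proof.
move=> hp hl [h1 h2]; split; first exact: normY_shrink.
by rewrite -scaleNr -mulrN; apply: normY_shrink; rewrite ?scaleNr.
Qed.

Lemma movable_le w p a b : N p <= 1 -> movable w p a -> 0 <= b <= a -> movable w p b.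
Proof.
move=> hp ha /andP[b0 ba]; have [a0|a0] := eqVneq a 0.
  have -> : b = 0 by apply/eqP; rewrite eq_le b0 andbT -a0.
  exact: movable0.
have -> : b = (b / a) * a by rewrite mulfVK.
apply: movable_scale => //; rewrite divr_ge0 ?(le_trans b0 ba) //=.
by rewrite ler_pdivrMr ?mul1r // lt_def a0 (le_trans b0 ba).
Qed.

Lemma movable_interior w p c : N p < 1 ->
  exists2 e, 0 < e & forall t, 0 < t <= e -> movable w p (t * c).
Proof.
move=> hp; set K := `|c| * N w + 1.
have K0 : 0 < K by rewrite ltr_pwDr ?mulr_ge0 ?(normY_ge0 hN).
exists ((1 - N p) / K) => [|t /andP[t0 te]]; first by rewrite divr_gt0 ?subr_gt0.
have : t * K <= 1 - N p by rewrite -ler_pdivlMr.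
rewrite /K mulrDr mulr1 => bound.
have step (s : R) : `|s| = t * `|c| -> N (p + s *: w) <= 1.
  move=> hs; apply: le_trans (normYD hN _ _) _; rewrite normYZ // hs -mulrA; nra.
split; first by apply: step; rewrite normrM gtr0_norm.
by rewrite -scaleNr; apply: step; rewrite normrN normrM gtr0_norm.
Qed.

Lemma mulmx_rank_one (w : 'cV[R]_2) (r : 'rV[R]_3) v : w *m r *m v = (r *m v) 0 0 *: w.
Proof. by rewrite -mulmxA {1}[r *m v]mx11_scalar mul_mx_scalar. Qed.

Lemma not_extreme_rank_one T w (r : 'rV[R]_3) : w != 0 -> r != 0 ->
  (forall b0 b1 b2, movable w (T *m signv R b0 b1 b2) ((r *m signv R b0 b1 b2) 0 0)) ->
  ~ extreme_contraction N T.
Proof.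
move=> w0 r0 H [_ hext].
have plus : opnorm N (T + w *m r) <= 1.
  by apply: opnorm_le1 => b0 b1 b2; rewrite mulmxDl mulmx_rank_one; case: (H b0 b1 b2).
have minus : opnorm N (T - w *m r) <= 1.
  by apply: opnorm_le1 => b0 b1 b2; rewrite mulmxBl mulmx_rank_one; case: (H b0 b1 b2).
have mid : T = 1 / 2 *: (T + w *m r) + (1 - 1 / 2) *: (T - w *m r).
  by apply/matrixP => i j; rewrite !mxE; field.
have half : (0 : R) < 1 / 2 /\ (1 : R) / 2 < 1 by split; lra.
have /matrixP wr0 := hext _ _ _ plus minus half.1 half.2 mid.
have [i [j /negP]] : exists i j, (w *m r) i j != 0.
  move/matrix0Pn: w0 => [i [k wi]]; move/matrix0Pn: r0 => [l [j rj]].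
  rewrite [k]ord1 in wi; rewrite [l]ord1 in rj.
  by exists i, j; rewrite mxE big_ord1; apply: mulf_neq0.
by apply; move: (wr0 i j); rewrite !mxE => e; apply/eqP; lra.
Qed.

Lemma not_extreme_of_slack T (r : 'rV[R]_3) : r != 0 -> opnorm N T <= 1 ->
  (forall b0 b1 b2, (r *m signv R b0 b1 b2) 0 0 = 0 \/ N (T *m signv R b0 b1 b2) < 1) ->
  ~ extreme_contraction N T.
Proof.
move=> r0 hT H; pose w : 'cV[R]_2 := const_mx 1.
have w0 : w != 0 by apply/matrix0Pn; exists 0, 0; rewrite mxE oner_neq0.
have [t t0 Ht] : exists2 t, 0 < t & forall e : bool * bool * bool,
    movable w (T *m signv R e.1.1 e.1.2 e.2) (t * (r *m signv R e.1.1 e.1.2 e.2) 0 0).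
  apply: uniform_pos => -[[b0 b1] b2] /=.
  case: (H b0 b1 b2) => [rv0 | lt1]; last exact: movable_interior.
  exists 1 => // t _; rewrite rv0 mulr0; apply: movable0.
  exact: le_trans (opnorm_ub _ (signv_ballX _ _ _ _)) hT.
apply: (@not_extreme_rank_one _ _ (t *: r) w0); first by rewrite scaler_eq0 negb_or gt_eqF.
by move=> b0 b1 b2; rewrite -scalemxAl mxE; exact: (Ht (b0, b1, b2)).
Qed.

Lemma not_extreme_movable_edge T w t b0 b1 b2 : (~~ b0 + ~~ b1 + ~~ b2 == 1)%N ->
  w != 0 -> 0 < t -> opnorm N T <= 1 ->
  movable w (T *m signv R true true true) t -> movable w (T *m signv R b0 b1 b2) t ->
  ~ extreme_contraction N T.
Proof.
move=> hb w0 t0 hT h1 hb'; pose r := row3 (b0%:R / 2 : R) (b1%:R / 2) (b2%:R / 2).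
have r1 : (r *m signv R true true true) 0 0 = 1.
  by rewrite row3_signv; case: b0 b1 b2 hb {r hb'} => [] [] [] //= _; rewrite /sg; lra.
apply: (@not_extreme_rank_one _ _ (t *: r) w0).
  by apply/eqP => /(congr1 (fun u => (u *m signv R true true true) 0 0));
    rewrite -scalemxAl mxE r1 mul0mx mxE mulr1; apply/eqP; rewrite gt_eqF.
move=> e0 e1 e2; rewrite -scalemxAl mxE.
case: (edge_row_signv R e0 e1 e2 hb) => [-> | [s [-> [-> | ->]]]].
- by rewrite mulr0; apply: movable0; exact: le_trans (opnorm_ub _ (signv_ballX _ _ _ _)) hT.
- by rewrite -scalemxAr; exact: movable_sg.
- by rewrite -scalemxAr; exact: movable_sg.
Qed.

Definition topmost (w X : 'cV[R]_2) := forall s, 0 < s -> 1 < N (X + s *: w).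

Lemma topmost_opp w X : topmost w X -> topmost (- w) (- X).
Proof. by move=> tX s s0; rewrite scalerN -opprD normYN //; apply: tX. Qed.

Lemma topmost_or_movable w p : N p <= 1 ->
  [\/ topmost w p, topmost w (- p) | exists2 t, 0 < t & movable w p t].
Proof.
move=> hp; have [tp|/existsNP[s1 /not_implyP[s1_0 /negP]]] := pselect (topmost w p).
  exact: Or31.
rewrite -leNgt => h1.
have [tq|/existsNP[s2 /not_implyP[s2_0 /negP]]] := pselect (topmost w (- p)).
  exact: Or32.
rewrite -leNgt => h2.
have {}h2 : N (p + s2 *: - w) <= 1 by rewrite scalerN -(normYN hN) opprD opprK.
set m := Num.min s1 s2.
have shrink v s : 0 < s -> m <= s -> N (p + s *: v) <= 1 -> N (p + m *: v) <= 1.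
  move=> s0 ms hs; rewrite -[m](divfK (lt0r_neq0 s0)); apply: normY_shrink => //.
  have m0 : 0 <= m by rewrite le_min !ltW.
  by rewrite divr_ge0 ?ler_pdivrMr ?mul1r ?(ltW s0).
apply: Or33; exists m; first by rewrite lt_min s1_0 s2_0.
split; first by apply: (shrink _ s1); rewrite ?ge_min ?lexx.
by rewrite -scalerN; apply: (shrink _ s2); rewrite ?ge_min ?lexx ?orbT.
Qed.

Lemma movable_oppw w p a : movable (- w) p a -> movable w p a.
Proof. by case; rewrite !scalerN opprK => h1 h2; split. Qed.

End Contractions.

Section Symmetry.
Variables (R : realType) (N : 'cV[R]_2 -> R) (F : 'M[R]_3).
Hypotheses (F_invol : F *m F = 1%:M) (F_ballX : forall y, ballX y -> ballX (F *m y)).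

Lemma opnorm_mulmx_invol (S : 'M[R]_(2, 3)) : opnorm N (S *m F) = opnorm N S.
Proof.
rewrite /opnorm; congr sup; apply/seteqP; split=> _ [x [hx ->]]; exists (F *m x).
  by rewrite mulmxA; split => //; exact: F_ballX.
by rewrite mulmxA -(mulmxA S) F_invol mulmx1; split => //; exact: F_ballX.
Qed.

Lemma extreme_contraction_mulmx_invol T :
  extreme_contraction N T -> extreme_contraction N (T *m F).
Proof.
case=> hT hext; split; first by rewrite /= opnorm_mulmx_invol.
move=> Y Z t hY hZ t0 t1 e.
have cancelF (S : 'M[R]_(2, 3)) : S *m F *m F = S by rewrite -mulmxA F_invol mulmx1.
rewrite -[Y]cancelF -[Z]cancelF; congr (_ *m F); apply: hext t0 t1 _.
- by rewrite /= opnorm_mulmx_invol.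
- by rewrite /= opnorm_mulmx_invol.
- by rewrite -[T]cancelF e mulmxDl -!scalemxAl.
Qed.

End Symmetry.

Section SignFlip.
Variable R : realType.

Lemma sg_mulss b : sg R b * sg R b = 1.
Proof. by case: b; rewrite /sg ?mulrNN mulr1. Qed.

Lemma signv_flip_invol b0 b1 b2 (x := signv R b0 b1 b2) : diag_mx x^T *m diag_mx x^T = 1%:M.
Proof.
apply/matrixP => i j; rewrite mul_diag_mx !mxE.
by have [->|nij] := eqVneq i j; rewrite ?mulr1n ?sg_mulss ?mulr0n ?mulr0.
Qed.

Lemma signv_flip_ballX b0 b1 b2 y : ballX y -> ballX (diag_mx (signv R b0 b1 b2)^T *m y).
Proof. by move/ballXP => hy; apply/ballXP => k; rewrite mul_diag_mx !mxE normrM sg_norm mul1r. Qed.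

Lemma signv_flip_ones b0 b1 b2 (x := signv R b0 b1 b2) :
  diag_mx x^T *m signv R true true true = x.
Proof. by apply/matrixP => i j; rewrite (ord1 j) mul_diag_mx !mxE !if_same mulr1. Qed.

End SignFlip.

(** * Chords of a two-dimensional unit ball *)

Section Chord.
Variables (R : realType) (N : 'cV[R]_2 -> R) (P w : 'cV[R]_2).
Hypotheses (hN : is_norm2 N) (hP : N P = 1) (hPw : movable N w P 1) (w0 : w != 0).

Lemma det2_Pw_neq0 : det2 P w != 0.
Proof.
apply/eqP => /(det2_eq0_parallel w0) [s Ps]; case: hPw; move: hP; rewrite Ps -scaleNr.
have E c : N (s *: w + c *: w) = `|s + c| * N w by rewrite -scalerDl normYZ.
rewrite !E normYZ // => hs h1 h2.
have le c : `|s + c| * N w <= 1 -> `|s + c| <= `|s|.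
  by rewrite -hs ler_pM2r ?normY_gt0.
move: (le _ h1) (le _ h2) => {h1 h2 le hs E Ps}.
case: (lerP 0 s) => s0; rewrite ?(ger0_norm s0) ?(ltr0_norm s0) !ler_norml.
all: by move=> /andP[? ?] /andP[? ?]; lra.
Qed.

(* Coordinates in the basis (P, w), by Cramer's rule. *)
Definition level X := det2 X w / det2 P w.
Definition height X := det2 P X / det2 P w.

Lemma chord_decomp X : X = level X *: P + height X *: w.
Proof.
have := det2_Pw_neq0; rewrite /level /height /det2 => d0.
by apply/matrixP => i j; rewrite (ord1 j) !mxE; case: (ord2P i) => ->; field.
Qed.

Lemma level_lin a b X Y : level (a *: X + b *: Y) = a * level X + b * level Y.
Proof. by rewrite /level /det2 !mxE; field; exact: det2_Pw_neq0. Qed.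

Lemma height_lin a b X Y : height (a *: X + b *: Y) = a * height X + b * height Y.
Proof. by rewrite /height /det2 !mxE; field; exact: det2_Pw_neq0. Qed.

Lemma levelD X Y : level (X + Y) = level X + level Y.
Proof. by rewrite -[X]scale1r -[Y]scale1r level_lin !mul1r !scale1r. Qed.

Lemma heightD X Y : height (X + Y) = height X + height Y.
Proof. by rewrite -[X]scale1r -[Y]scale1r height_lin !mul1r !scale1r. Qed.

Lemma levelP : level P = 1.
Proof. by rewrite /level divff ?det2_Pw_neq0. Qed.

Lemma levelw : level w = 0.
Proof. by rewrite /level /det2 [w 0 0 * _]mulrC subrr mul0r. Qed.

Lemma heightP : height P = 0.
Proof. by rewrite /height /det2 [P 0 0 * _]mulrC subrr mul0r. Qed.

Lemma heightw : height w = 1.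
Proof. by rewrite /height divff ?det2_Pw_neq0. Qed.

Lemma normY_P_add_ge1 c : 1 <= N (P + c *: w).
Proof.
case: hPw => hp hm; case: (lerP 0 c) => c0.
  by apply: (normY_ge1_ray hN); rewrite // -[w]scale1r.
rewrite -[c]opprK scaleNr -scalerN; apply: (normY_ge1_ray hN) => //.
  by rewrite opprK -[w]scale1r.
by rewrite oppr_ge0 ltW.
Qed.

Lemma level_le_norm X : `|level X| <= N X.
Proof.
have [->|l0] := eqVneq (level X) 0; first by rewrite normr0 normY_ge0.
have E : X = level X *: (P + (height X / level X) *: w).
  by rewrite scalerDr scalerA mulrC divfK // -chord_decomp.
by rewrite [in N X]E normYZ // ler_peMr ?normY_P_add_ge1.
Qed.

Lemma level_bound X : N X <= 1 -> -1 <= level X <= 1.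
Proof. by move=> hX; rewrite -ler_norml (le_trans (level_le_norm X)). Qed.

Lemma topmost_height X Y : topmost N w X -> N Y <= 1 -> level Y = level X ->
  height Y <= height X.
Proof.
move=> tX hY eXY; rewrite leNgt; apply/negP; rewrite -subr_gt0 => /tX.
have -> : X + (height Y - height X) *: w = Y.
  apply/matrixP => i j; move: (chord_decomp X) (chord_decomp Y).
  move=> /matrixP/(_ i j) eX /matrixP/(_ i j) eY; rewrite !mxE in eX eY *.
  by rewrite eX eY eXY; ring.
by rewrite ltNge hY.
Qed.

Lemma topmost_height_ge1 X : topmost N w X -> N X <= 1 -> 1 <= height X.
Proof.
move=> tX hX; have /andP[l1 l2] := level_bound hX.
set Y := level X *: P + w.
have <- : height Y = 1 by rewrite /Y -[w]scale1r height_lin heightP heightw; ring.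
apply: topmost_height => //; last first.
  by rewrite /Y -[w]scale1r level_lin levelP levelw; ring.
have -> : Y = ((1 + level X) / 2) *: (P + 1 *: w) + (1 - (1 + level X) / 2) *: - (P - 1 *: w).
  by apply/matrixP => i j; rewrite !mxE; field.
case: hPw => hp hm; apply: normY_convex; rewrite ?normYN //.
by apply/andP; split; lra.
Qed.

Lemma no_three_topmost q0 q1 q2 :
  topmost N w q0 -> topmost N w q1 -> topmost N w q2 ->
  N q0 <= 1 -> N q1 <= 1 -> N q2 <= 1 -> q0 + q1 + q2 = P -> False.
Proof.
move=> t0 t1 t2 n0 n1 n2 /(congr1 height); rewrite !heightD heightP.
by move: (topmost_height_ge1 t0 n0) (topmost_height_ge1 t1 n1) (topmost_height_ge1 t2 n2); lra.
Qed.

(* Concavity of the upper boundary of the ball as a function of the level. *)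
Lemma no_two_topmost_one_bottommost q0 q1 q2 :
  topmost N w q0 -> topmost N w q1 -> topmost N w (- q2) ->
  N q0 <= 1 -> N q1 <= 1 -> N q2 <= 1 -> q0 + q1 + q2 = P -> False.
Proof.
move=> t0 t1 tZ n0 n1 n2 e; set Z := - q2 in tZ.
have nZ : N Z <= 1 by rewrite normYN.
have {}e : q0 + q1 = P + Z by rewrite /Z -e addrK.
have lv := congr1 level e; have ht := congr1 height e.
rewrite !levelD levelP in lv; rewrite !heightD heightP in ht.
move: (level_bound n0) (level_bound n1) (level_bound nZ) => /andP[? ?] /andP[? ?] /andP[? ?].
have [l /andP[l0 l1] hl] : exists2 l, 0 <= l <= 1 & level q0 = l * level Z + (1 - l) * 1.
  by apply: segment_param; apply/andP; split; lra.
have Pw : N (P + w) <= 1 by case: hPw; rewrite scale1r.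
have hU : height (l *: Z + (1 - l) *: (P + w)) <= height q0.
  apply: topmost_height => //; first by apply: normY_convex; rewrite ?l0.
  by rewrite level_lin levelD levelP levelw hl; ring.
have hV : height ((1 - l) *: Z + (1 - (1 - l)) *: (P + w)) <= height q1.
  apply: topmost_height => //; first by apply: normY_convex => //; apply/andP; split; lra.
  by rewrite level_lin levelD levelP levelw; lra.
move: hU hV; rewrite !height_lin !heightD heightP heightw; lra.
Qed.

End Chord.

Lemma no_rigid_triple (R : realType) (N : 'cV[R]_2 -> R) (P w q0 q1 q2 : 'cV[R]_2) :
  is_norm2 N -> N P = 1 -> movable N w P 1 -> w != 0 ->
  N q0 <= 1 -> N q1 <= 1 -> N q2 <= 1 -> q0 + q1 + q2 = P ->
  (forall t, 0 < t -> ~ movable N w q0 t) -> (forall t, 0 < t -> ~ movable N w q1 t) ->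
  (forall t, 0 < t -> ~ movable N w q2 t) -> False.
Proof.
move=> hN hP hPw w0 n0 n1 n2 e r0 r1 r2.
have hPw' : movable N (- w) P 1 by apply: movable_oppw; rewrite opprK.
have w0' : - w != 0 by rewrite oppr_eq0.
have side q : N q <= 1 -> (forall t, 0 < t -> ~ movable N w q t) ->
    topmost N w q \/ topmost N (- w) q.
  move=> nq rq; case: (topmost_or_movable hN w nq) => [tq | tq | [t t0 /rq //]].
    by left.
  by right; move: (topmost_opp hN tq); rewrite opprK.
have e021 : q0 + q2 + q1 = P by rewrite addrAC.
have e120 : q1 + q2 + q0 = P by rewrite addrC addrA.
have down q : topmost N w q -> topmost N (- w) (- q) := @topmost_opp _ _ hN w q.
have up q : topmost N (- w) q -> topmost N w (- q).
  by move/(topmost_opp hN); rewrite opprK.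
case: (side _ n0 r0) => t0; case: (side _ n1 r1) => t1; case: (side _ n2 r2) => t2.
- exact: (no_three_topmost hN hP hPw w0 t0 t1 t2).
- exact: (no_two_topmost_one_bottommost hN hP hPw w0 t0 t1 (up _ t2)).
- exact: (no_two_topmost_one_bottommost hN hP hPw w0 t0 t2 (up _ t1)).
- exact: (no_two_topmost_one_bottommost hN hP hPw' w0' t1 t2 (down _ t0)).
- exact: (no_two_topmost_one_bottommost hN hP hPw w0 t1 t2 (up _ t0)).
- exact: (no_two_topmost_one_bottommost hN hP hPw' w0' t0 t2 (down _ t1)).
- exact: (no_two_topmost_one_bottommost hN hP hPw' w0' t0 t1 (down _ t2)).
- exact: (no_three_topmost hN hP hPw' w0' t0 t1 t2).
Qed.

(** * Extreme contractions *)

Section ExtremeContractions.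
Variables (R : realType) (N : 'cV[R]_2 -> R).
Hypothesis hN : is_norm2 N.

Lemma extreme_ballY_of_rigid P : N P <= 1 -> (forall w, movable N w P 1 -> w = 0) ->
  extreme_point (ballY N) P.
Proof.
move=> hP rigid; split=> // y z t hy hz t0 t1 e.
set m := Num.min t (1 - t).
have m0 : 0 < m by rewrite lt_min t0 subr_gt0.
have [mt mt'] : m <= t /\ m <= 1 - t by rewrite !ge_min !lexx orbT.
have comb c : 0 <= t + c <= 1 -> N (P + c *: (y - z)) <= 1.
  move=> hc; have -> : P + c *: (y - z) = (t + c) *: y + (1 - (t + c)) *: z.
    by rewrite e; apply/matrixP => i j; rewrite !mxE; ring.
  exact: normY_convex.
have /eqP : m *: (y - z) = 0.
  apply: rigid; rewrite /movable scale1r -scaleNr; split; apply: comb; apply/andP; split; lra.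
by rewrite scaler_eq0 (gt_eqF m0) subr_eq0 => /eqP.
Qed.

Lemma extreme_contraction_image_ones T : opnorm N T = 1 -> extreme_contraction N T ->
  N (T *m signv R true true true) = 1 -> extreme_point (ballY N) (T *m signv R true true true).
Proof.
move=> hT hext hP; apply: extreme_ballY_of_rigid; first by rewrite hP.
move=> w hw; case: (eqVneq w 0) => // w0; exfalso.
have ball b0 b1 b2 : N (T *m signv R b0 b1 b2) <= 1.
  by rewrite -hT; apply: opnorm_ub => //; exact: signv_ballX.
have rigid b0 b1 b2 : (~~ b0 + ~~ b1 + ~~ b2 == 1)%N ->
    forall t, 0 < t -> ~ movable N w (T *m signv R b0 b1 b2) t.
  move=> hb t t0 ht; set m := Num.min t 1.
  have m0 : 0 < m by rewrite lt_min t0 ltr01.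
  have [mt m1] : m <= t /\ m <= 1 by rewrite !ge_min !lexx orbT.
  apply: (not_extreme_movable_edge hN hb w0 m0 _ _ _ hext); first by rewrite hT.
    by apply: (movable_le hN (ball _ _ _) hw); rewrite ltW.
  by apply: (movable_le hN (ball _ _ _) ht); rewrite ltW.
apply: (no_rigid_triple hN hP hw w0 (ball false true true) (ball true false true)
  (ball true true false) _ (rigid _ _ _ _) (rigid _ _ _ _) (rigid _ _ _ _)) => //.
rewrite -!mulmxDr; congr (T *m _).
by apply/matrixP => i j; rewrite !mxE; case: (ord3P i) => ->; rewrite /sg /=; lra.
Qed.

Lemma extreme_contraction_maps_extreme T x : opnorm N T = 1 -> extreme_contraction N T ->
  (MT N T `&` extreme_point (@ballX R)) x -> extreme_point (ballY N) (T *m x).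
Proof.
move=> hT hext [[_ hx] /extreme_ballX_signv [b0 [b1 [b2 ex]]]]; subst x.
have invol := signv_flip_invol R b0 b1 b2; have ballF := @signv_flip_ballX R b0 b1 b2.
rewrite -signv_flip_ones mulmxA; apply: extreme_contraction_image_ones.
- by rewrite opnorm_mulmx_invol.
- exact: extreme_contraction_mulmx_invol.
- by rewrite -mulmxA signv_flip_ones hx.
Qed.

Lemma extreme_contraction_six_vertices T : opnorm N T = 1 -> extreme_contraction N T ->
  exists s : seq 'cV[R]_3, uniq s /\ (6 <= size s)%N /\
    (forall x, x \in s -> (MT N T `&` extreme_point (@ballX R)) x).
Proof.
move=> hT hext; pose p (u : 'cV[R]_3) := N (T *m u) == 1.
have pN u : p (- u) = p u by rewrite /p mulmxN normYN.
exists [seq u <- vertices R | p u]; split; [|split].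
- exact/filter_uniq/vertices_uniq.
- rewrite size_filter_pm // -[6%N]/(3.*2)%N leq_double leqNgt; apply/negP => few.
  have [r r0 vanish] := exists_row_vanishing few.
  apply: (not_extreme_of_slack hN r0 _ _ hext); first by rewrite hT.
  move=> b0 b1 b2; have [u ur [s ->]] := signv_rep R b0 b1 b2.
  rewrite -!scalemxAr normYZ // sg_norm mul1r mxE.
  case pu: (p u); first by left; rewrite vanish ?mulr0.
  right; move: pu; rewrite lt_neqAle /p => -> /=; rewrite -hT opnorm_ub //.
  by have := ur; rewrite !inE => /or4P[] /eqP ->; exact: signv_ballX.
- move=> x; rewrite mem_filter => /andP[/eqP px /vertices_signv [b0 [b1 [b2 ex]]]].
  by rewrite ex in px *; split; [split; rewrite ?linf3_signv ?hT | exact: signv_extreme].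
Qed.

Lemma extreme_contraction_of_vertices T : opnorm N T = 1 ->
  (exists s : seq 'cV[R]_3, uniq s /\ (6 <= size s)%N /\
    (forall x, x \in s -> (MT N T `&` extreme_point (@ballX R)) x)) ->
  (forall x, (MT N T `&` extreme_point (@ballX R)) x -> extreme_point (ballY N) (T *m x)) ->
  extreme_contraction N T.
Proof.
move=> hT [s [us [hs Hs]]] Hext; split=> [|Y Z t hY hZ t0 t1 e]; first by rewrite /= hT.
apply/eqP; rewrite -subr_eq0; apply/eqP; apply: (kill_six_vertices_eq0 us hs).
  by move=> x /Hs [_ /extreme_ballX_signv].
move=> x xs; have [_ hx] := Hext x (Hs x xs); have xb : ballX x by case: (Hs x xs) => _ [].
have ball S : opnorm N S <= 1 -> N (S *m x) <= 1.
  by move=> hS; exact: le_trans (opnorm_ub hN S xb) hS.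
rewrite mulmxBl (hx (Y *m x) (Z *m x) t (ball _ hY) (ball _ hZ) t0 t1) ?subrr //.
by rewrite e mulmxDl -!scalemxAl.
Qed.

End ExtremeContractions.

Unset Implicit Arguments.

Theorem theorem3p11 (R : realType) (N : 'cV[R]_2 -> R)
  (hN : is_norm2 N) (hpoly : polygonal N) (T : 'M[R]_(2,3))
  (hT : opnorm N T = 1) :
  extreme_contraction N T <->
  ((exists s : seq 'cV[R]_3, uniq s /\ (6 <= size s)%N /\
      (forall x, x \in s -> (MT N T `&` extreme_point (@ballX R)) x)) /\
   (forall x, (MT N T `&` extreme_point (@ballX R)) x ->
      extreme_point (ballY N) (T *m x))).
Proof.
split=> [hext | [six maps_ext]].
- split; first exact: extreme_contraction_six_vertices.
  by move=> x; exact: extreme_contraction_maps_extreme.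
- exact: extreme_contraction_of_vertices.
Qed.
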